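(* Let $\Phi:\mathbb{R}^N\to\mathbb{R}^M$ and $L:\mathbb{R}^P\to\mathbb{R}^N$ be linear operators, let $\|\cdot\|_A$ be a norm on $\mathbb{R}^P$ with dual norm $\|\cdot\|_A^*$, and set $R(x)=\|L^*x\|_A$. Let $y\in\mathbb{R}^M$, $\lambda>0$, and let $x^\star$ be a minimizer of $\min_{x\in\mathbb{R}^N}\tfrac12\|y-\Phi x\|_2^2+\lambda R(x)$. Assume $\|\cdot\|_A$ is decomposable at $u^\star=L^*x^\star$ with associated subspace $T$ and vector $e\in T$, and let $S=T^\perp$. Assume that there exist $\eta\in\mathbb{R}^M$ and $\alpha\in\partial\|\cdot\|_A(L^*x^\star)$ with $\Phi^*\eta=L\alpha$ and $\|\alpha_S\|_A^*<1$, and that $\Phi$ is injective on $\ker(L_S^* )$. Then $x^\star$ is the unique minimizer of this problem.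
   Context: For a subspace $V\subset\mathbb{R}^P$, $P_V$ denotes the orthogonal projector onto $V$, and $L_V=LP_V$, $L_V^*=P_VL^*$, $\alpha_V=P_V\alpha$ for $\alpha\in\mathbb{R}^P$. A norm $\|\cdot\|_A$ on $\mathbb{R}^P$ is decomposable at $u\in\mathbb{R}^P$ if (i) there exist a subspace $T\subset\mathbb{R}^P$ and a vector $e\in T$ such that $\partial\|\cdot\|_A(u)=\{\alpha\in\mathbb{R}^P:\ \alpha_T=e,\ \|\alpha_{T^\perp}\|_A^*\le 1\}$, and (ii) for every $z\in T^\perp$, $\|z\|_A=\sup\{\langle v,z\rangle: v\in T^\perp,\ \|v\|_A^*\le 1\}$. *)

(* finite-dimensional real spaces R^n are column vectors 'cV[R]_n
   over an abstract R : realType; linear operators are matrices, adjoints are transposes. *)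
From HB Require Import structures.
From mathcomp Require Import all_boot all_order all_algebra.
From mathcomp Require Import boolp classical_sets reals.
Set Implicit Arguments. Unset Strict Implicit. Unset Printing Implicit Defensive.
Import Order.TTheory GRing.Theory Num.Theory.
Local Open Scope ring_scope.
Local Open Scope classical_set_scope.

Section Defs.
Variable R : realType.

Definition dotv n (u v : 'cV[R]_n) : R := (u^T *m v) 0 0.
Definition sqnorm2 n (u : 'cV[R]_n) : R := dotv u u.

Definition is_norm n (A : 'cV[R]_n -> R) : Prop :=
  [/\ forall x y, A (x + y) <= A x + A y,
      forall (a : R) x, A (a *: x) = `|a| * A x
    & forall x, A x = 0 -> x = 0].

Definition dual_norm n (A : 'cV[R]_n -> R) (v : 'cV[R]_n) : R :=
  sup [set dotv v z | z in [set z | A z <= 1]].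

Definition subdiff n (A : 'cV[R]_n -> R) (u : 'cV[R]_n) : set 'cV[R]_n :=
  [set alpha | forall w, A u + dotv alpha (w - u) <= A w].

Definition is_orth_proj n (T : set 'cV[R]_n) (pT : 'M[R]_n) : Prop :=
  (forall v, T v <-> exists w, v = pT *m w) /\ pT *m pT = pT /\ pT^T = pT.

Definition is_subspace n (T : set 'cV[R]_n) : Prop :=
  T 0 /\ (forall (a : R) u v, T u -> T v -> T (a *: u + v)).

Definition orth_compl n (T : set 'cV[R]_n) : set 'cV[R]_n :=
  [set z | forall v, T v -> dotv v z = 0].

Definition decomposable_at n (A : 'cV[R]_n -> R) (u : 'cV[R]_n)
    (T : set 'cV[R]_n) (pT : 'M[R]_n) (e : 'cV[R]_n) : Prop :=
  let pS := 1%:M - pT in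
  [/\ is_subspace T, is_orth_proj T pT, T e,
      subdiff A u = [set alpha | pT *m alpha = e /\ dual_norm A (pS *m alpha) <= 1]
    & forall z, orth_compl T z ->
        A z = sup [set dotv v z | v in [set v | orth_compl T v /\ dual_norm A v <= 1]]].

Definition objective M N P (Phi : 'M[R]_(M, N)) (L : 'M[R]_(N, P))
    (A : 'cV[R]_P -> R) (y : 'cV[R]_M) (lambda : R) (x : 'cV[R]_N) : R :=
  2^-1 * sqnorm2 (y - Phi *m x) + lambda * A (L^T *m x).

End Defs.

(* All minimizers share [Phi x], since the data term is strictly convex in it,
   and therefore also the value [A (L^T x)].  Because [L alpha = Phi^T eta],
   the subgradient [alpha] at [L^T xs] is then tight at [L^T x] for every
   minimizer [x].  For such a tight [z], decomposability gives
   [A (P_S z) <= A z - <e, z> = <alpha_S, P_S z> <= ||alpha_S||^* A (P_S z)],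
   so [||alpha_S||^* < 1] forces [P_S z = 0]; injectivity of [Phi] on
   [ker (P_S L^T)] then identifies [x] with [xs]. *)

From HB Require Import structures.
From mathcomp Require Import all_boot all_order all_algebra.
From mathcomp Require Import boolp classical_sets reals.
From mathcomp Require Import ring lra.
Import Order.TTheory GRing.Theory Num.Theory.
Local Open Scope ring_scope.
Local Open Scope classical_set_scope.
Set Implicit Arguments. Unset Strict Implicit.

Section InnerProduct.
Variables (R : realType) (n : nat).
Implicit Types (u v w : 'cV[R]_n).

Lemma dotvC u v : dotv u v = dotv v u.
Proof. by rewrite /dotv -[in LHS](trmxK (u^T *m v)) trmx_mul trmxK mxE. Qed.

Lemma dotvDl u v w : dotv (u + v) w = dotv u w + dotv v w.
Proof. by rewrite /dotv linearD mulmxDl mxE. Qed.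

Lemma dotvZl (a : R) u w : dotv (a *: u) w = a * dotv u w.
Proof. by rewrite /dotv linearZ /= -scalemxAl mxE. Qed.

Lemma dotvDr u v w : dotv w (u + v) = dotv w u + dotv w v.
Proof. by rewrite dotvC dotvDl !(dotvC w). Qed.

Lemma dotvZr (a : R) u w : dotv w (a *: u) = a * dotv w u.
Proof. by rewrite dotvC dotvZl dotvC. Qed.

Lemma dotvNr u w : dotv w (- u) = - dotv w u.
Proof. by rewrite -scaleN1r dotvZr mulN1r. Qed.

Lemma dotvBr u v w : dotv w (u - v) = dotv w u - dotv w v.
Proof. by rewrite dotvDr dotvNr. Qed.

Lemma dotvNl u w : dotv (- u) w = - dotv u w.
Proof. by rewrite dotvC dotvNr dotvC. Qed.

Lemma dotv0r u : dotv u 0 = 0.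
Proof. by rewrite /dotv mulmx0 mxE. Qed.

Lemma dotv0l u : dotv 0 u = 0.
Proof. by rewrite dotvC dotv0r. Qed.

Lemma dotv_mulmxr m (B : 'M[R]_(m, n)) (u : 'cV[R]_m) v :
  dotv u (B *m v) = dotv (B^T *m u) v.
Proof. by rewrite /dotv trmx_mul trmxK mulmxA. Qed.

Lemma sqnorm2_ge0 u : 0 <= sqnorm2 u.
Proof.
rewrite /sqnorm2 /dotv mxE; apply: sumr_ge0 => i _.
by rewrite mxE -expr2 sqr_ge0.
Qed.

Lemma sqnorm2_eq0 u : sqnorm2 u = 0 -> u = 0.
Proof.
rewrite /sqnorm2 /dotv mxE => /psumr_eq0P u0; apply/matrixP => i j.
have sq_ge0 k : true -> 0 <= u^T 0 k * u k 0 by rewrite mxE -expr2 sqr_ge0.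
have := u0 sq_ge0 i isT.
by rewrite !mxE ord1 -expr2 => /eqP; rewrite sqrf_eq0 => /eqP.
Qed.

Lemma sqnorm2_midpoint u v :
  sqnorm2 (2^-1 *: (u + v)) = 2^-1 * (sqnorm2 u + sqnorm2 v) - 4^-1 * sqnorm2 (u - v).
Proof.
rewrite /sqnorm2 dotvZl dotvZr !dotvDl !dotvDr !dotvNl !dotvNr (dotvC v u).
by field.
Qed.

End InnerProduct.

Section Norm.
Variables (R : realType) (n : nat) (A : 'cV[R]_n -> R).
Hypothesis normA : is_norm A.
Implicit Types (u v w z : 'cV[R]_n).

Local Notation dual_image w := [set dotv w z | z in [set z | A z <= 1]].

Lemma norm0 : A 0 = 0.
Proof.
by case: normA => _ AZ _; rewrite -(scale0r (0 : 'cV[R]_n)) AZ normr0 mul0r.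
Qed.

Lemma normN v : A (- v) = A v.
Proof. by case: normA => _ AZ _; rewrite -scaleN1r AZ normrN normr1 mul1r. Qed.

Lemma norm_ge0 v : 0 <= A v.
Proof.
case: normA => Atri _ _; have := Atri v (- v).
by rewrite subrr norm0 normN => ?; lra.
Qed.

Lemma norm_midpoint_le u v : A (2^-1 *: (u + v)) <= 2^-1 * (A u + A v).
Proof.
case: normA => Atri AZ _; rewrite AZ ger0_norm ?invr_ge0 ?ler0n //.
by rewrite ler_wpM2l ?invr_ge0 ?ler0n.
Qed.

(* Testing the subgradient inequality at [0] and [2 u] forces equality at [u]. *)
Lemma subdiff_norm_dotv u b : subdiff A u b -> dotv b u = A u.
Proof.
case: normA => _ AZ _ bu.
have := bu 0; have := bu (u + u).
rewrite sub0r dotvNr norm0 addrK -mulr2n -scaler_nat AZ normr_nat.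
by move=> ? ?; lra.
Qed.

Lemma subdiff_norm_le u b w : subdiff A u b -> dotv b w <= A w.
Proof.
move=> bu; have := bu w; rewrite dotvBr (subdiff_norm_dotv bu).
by move=> ?; lra.
Qed.

Lemma dual_norm0 : dual_norm A 0 = 0.
Proof.
rewrite /dual_norm -[RHS](sup1 (0 : R)); congr sup; apply/seteqP; split.
  by move=> _ [z _ <-]; rewrite dotv0l.
by move=> _ ->; exists 0; rewrite /= ?norm0 ?ler01 ?dotv0l.
Qed.

(* The junk value [sup E = 0] for unbounded [E] is inherited by all positive multiples. *)
Lemma dual_norm_unbounded w t :
  ~ has_ubound (dual_image w) -> 0 < t -> dual_norm A (t *: w) = 0.
Proof.
move=> wunb t0; rewrite /dual_norm sup_out // => -[_ [B tB]].
apply: wunb; exists (B / t) => _ [z Az <-].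
by rewrite ler_pdivlMr // mulrC -dotvZl; apply: tB; exists z.
Qed.

Lemma dotv_le_dual_norm w z :
  has_ubound (dual_image w) -> dotv w z <= dual_norm A w * A z.
Proof.
move=> wub; have [Az0|Az_neq0] := eqVneq (A z) 0.
  by case: normA => _ _ Adef; rewrite (Adef _ Az0) dotv0r norm0 mulr0.
have Az_gt0 : 0 < A z by rewrite lt0r Az_neq0 norm_ge0.
have -> : dotv w z = A z * dotv w ((A z)^-1 *: z).
  by rewrite dotvZr mulrA divff // mul1r.
rewrite mulrC ler_wpM2r ?norm_ge0 //; apply: (ub_le_sup wub).
exists ((A z)^-1 *: z) => //=.
by case: normA => _ AZ _; rewrite AZ ger0_norm ?invr_ge0 ?norm_ge0 // mulVf.
Qed.

End Norm.

Section OrthProj.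
Variables (R : realType) (n : nat) (T : set 'cV[R]_n) (pT : 'M[R]_n).
Hypothesis projT : is_orth_proj T pT.
Implicit Types (u v w z : 'cV[R]_n).

Local Notation pS := (1%:M - pT).

Lemma orth_proj_fixed v : T v -> pT *m v = v.
Proof.
case: projT => Tim [pT2 _] /Tim [w ->]; by rewrite mulmxA pT2.
Qed.

Lemma orth_proj_compl_tr : pS^T = pS.
Proof. by case: projT => _ [_ pTtr]; rewrite linearB /= trmx1 pTtr. Qed.

Lemma orth_proj_compl_eq0 v : orth_compl T v -> pT *m v = 0.
Proof.
case: projT => Tim [pT2 pTtr] vS.
apply: sqnorm2_eq0; rewrite /sqnorm2 dotv_mulmxr pTtr mulmxA pT2.
by apply: vS; apply/Tim; exists v.
Qed.

Lemma orth_proj_compl_fixed v : orth_compl T v -> pS *m v = v.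
Proof. by move=> vS; rewrite mulmxBl mul1mx orth_proj_compl_eq0 // subr0. Qed.

Lemma orth_proj_compl_mem z : orth_compl T (pS *m z).
Proof.
case: projT => Tim [pT2 pTtr] _ /Tim [w ->].
rewrite dotvC dotv_mulmxr pTtr mulmxA.
by rewrite mulmxBr mulmx1 pT2 subrr mul0mx dotv0l.
Qed.

Lemma dotv_orth_proj_compl w z : orth_compl T w -> dotv w (pS *m z) = dotv w z.
Proof.
by move=> wS; rewrite dotv_mulmxr orth_proj_compl_tr orth_proj_compl_fixed.
Qed.

End OrthProj.

Section Decomposable.
Variables (R : realType) (n : nat) (A : 'cV[R]_n -> R) (u : 'cV[R]_n).
Variables (T : set 'cV[R]_n) (pT : 'M[R]_n) (e : 'cV[R]_n).
Hypotheses (normA : is_norm A) (decA : decomposable_at A u T pT e).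
Implicit Types (v w z : 'cV[R]_n).

Local Notation pS := (1%:M - pT).
Local Notation dual_image w := [set dotv w z | z in [set z | A z <= 1]].

Let projT : is_orth_proj T pT. Proof. by case: decA. Qed.

Lemma orth_compl_scale (t : R) w : orth_compl T w -> orth_compl T (t *: w).
Proof. by move=> wS v Tv; rewrite dotvZr wS // mulr0. Qed.

Lemma subdiff_decomposable v :
  orth_compl T v -> dual_norm A v <= 1 -> subdiff A u (e + v).
Proof.
case: decA => _ _ Te -> _ vS dv.
have pTe := orth_proj_fixed projT Te.
rewrite /= !mulmxDr pTe (orth_proj_compl_eq0 projT vS) (orth_proj_compl_fixed projT vS).
by rewrite mulmxBl mul1mx pTe subrr add0r addr0.
Qed.

Lemma norm_orth_proj_compl_le z : A (pS *m z) <= A z - dotv e z.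
Proof.
case: decA => _ _ _ _ ->; last exact: (orth_proj_compl_mem projT).
apply: ge_sup.
  exists 0, 0; last exact: dotv0l.
  by split; [move=> ? _; rewrite dotv0r | rewrite dual_norm0 // ler01].
move=> _ [v [vS dv] <-]; rewrite (dotv_orth_proj_compl projT) //.
have := subdiff_norm_le normA z (subdiff_decomposable vS dv).
by rewrite dotvDl => ?; lra.
Qed.

(* Otherwise every [e + t w], [t > 0], would be a subgradient at [u], so that
   [t * sqnorm2 w <= A (u + w) - A u] for all [t > 0]. *)
Lemma orth_compl_dual_image_bounded w :
  orth_compl T w -> has_ubound (dual_image w).
Proof.
move=> wS; apply: contrapT => wunb.
have [/sqnorm2_eq0 w0|sw_neq0] := eqVneq (sqnorm2 w) 0.
  by apply: wunb; exists 0 => _ [z _ <-]; rewrite w0 dotv0l.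
have sw_gt0 : 0 < sqnorm2 w by rewrite lt0r sw_neq0 sqnorm2_ge0.
set C := A (u + w) - A u.
have growth t : 0 < t -> t * sqnorm2 w <= C.
  move=> t0; have etw : subdiff A u (e + t *: w).
    apply: subdiff_decomposable; first exact: orth_compl_scale.
    by rewrite dual_norm_unbounded // ler01.
  have := etw (u + w); rewrite addrAC subrr add0r dotvDl dotvZl.
  case: decA => _ _ Te _ _; rewrite wS // /sqnorm2 => ?; rewrite /C; lra.
have t_gt0 : 0 < (`|C| + 1) / sqnorm2 w by rewrite divr_gt0 // ltr_pwDr // ler01.
have := growth _ t_gt0; rewrite -mulrA mulVf // mulr1.
by have := ler_norm C => ?; lra.
Qed.

Lemma orth_proj_compl_eq0_of_tight alpha z :
  subdiff A u alpha -> dual_norm A (pS *m alpha) < 1 ->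
  dotv alpha z = A z -> pS *m z = 0.
Proof.
move=> alpha_sub dual_lt1 tight.
set w := pS *m alpha; set zS := pS *m z.
have wS : orth_compl T w := orth_proj_compl_mem projT alpha.
have pTalpha : pT *m alpha = e by move: alpha_sub; case: decA => _ _ _ -> _ [].
have alphaE : alpha = e + w by rewrite /w mulmxBl mul1mx pTalpha addrC subrK.
have Az_le : A zS <= dotv w zS.
  rewrite /zS (dotv_orth_proj_compl projT) //.
  by have := norm_orth_proj_compl_le z; rewrite -tight alphaE dotvDl => ?; lra.
have Az_le_dual : A zS <= dual_norm A w * A zS.
  exact: le_trans Az_le (dotv_le_dual_norm normA _ (orth_compl_dual_image_bounded wS)).
case: normA => _ _ Adef; apply: Adef; apply/eqP; rewrite eq_le norm_ge0 // andbT.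
have : A zS * (1 - dual_norm A w) <= 0 by rewrite mulrBr mulr1 mulrC; lra.
by rewrite pmulr_lle0 // subr_gt0.
Qed.

End Decomposable.

Section Objective.
Variables (R : realType) (M N P : nat).
Variables (Phi : 'M[R]_(M, N)) (L : 'M[R]_(N, P)) (A : 'cV[R]_P -> R).
Variables (y : 'cV[R]_M) (lambda : R).
Hypotheses (normA : is_norm A) (lambda_ge0 : 0 <= lambda).

Local Notation F := (objective Phi L A y lambda).
Local Notation is_min x := (forall z, F x <= F z).

Lemma objective_midpoint_le x1 x2 :
  F (2^-1 *: (x1 + x2)) <=
    2^-1 * (F x1 + F x2) - 8^-1 * sqnorm2 (Phi *m x1 - Phi *m x2).
Proof.
have resE : y - Phi *m (2^-1 *: (x1 + x2)) =
    2^-1 *: ((y - Phi *m x1) + (y - Phi *m x2)).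
  rewrite -scalemxAr mulmxDr; move: (Phi *m x1) (Phi *m x2) => a b.
  by apply/matrixP => i j; rewrite !mxE; lra.
have residual_diff : (y - Phi *m x1) - (y - Phi *m x2) = Phi *m x2 - Phi *m x1.
  by rewrite opprB addrC addrA subrK.
have := norm_midpoint_le normA (L^T *m x1) (L^T *m x2).
rewrite -mulmxDr scalemxAr => reg_le.
have sq_sym : sqnorm2 (Phi *m x2 - Phi *m x1) = sqnorm2 (Phi *m x1 - Phi *m x2).
  by rewrite -opprB /sqnorm2 dotvNl dotvNr opprK.
rewrite /objective resE sqnorm2_midpoint residual_diff sq_sym.
have := ler_wpM2l lambda_ge0 reg_le => ?; lra.
Qed.

(* Strict convexity of the data term in [Phi x]. *)
Lemma minimizers_image_eq x1 x2 : is_min x1 -> is_min x2 -> Phi *m x1 = Phi *m x2.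
Proof.
move=> min1 min2; apply/eqP; rewrite -subr_eq0; apply/eqP/sqnorm2_eq0.
have := objective_midpoint_le x1 x2.
have := min1 (2^-1 *: (x1 + x2)); have := min1 x2; have := min2 x1.
have := sqnorm2_ge0 (Phi *m x1 - Phi *m x2) => ? ? ? ? ?; lra.
Qed.

Lemma minimizers_norm_eq x1 x2 : 0 < lambda ->
  is_min x1 -> is_min x2 -> A (L^T *m x1) = A (L^T *m x2).
Proof.
move=> lambda_gt0 min1 min2; have := min1 x2; have := min2 x1.
rewrite /objective (minimizers_image_eq min1 min2) => ? ?.
by apply: (mulfI (lt0r_neq0 lambda_gt0)); lra.
Qed.

End Objective.

Theorem corollary1 (R : realType) (M N P : nat)
    (Phi : 'M[R]_(M, N)) (L : 'M[R]_(N, P)) (A : 'cV[R]_P -> R)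
    (y : 'cV[R]_M) (lambda : R) (xs : 'cV[R]_N)
    (T : set 'cV[R]_P) (pT : 'M[R]_P) (e : 'cV[R]_P)
    (eta : 'cV[R]_M) (alpha : 'cV[R]_P) :
  is_norm A ->
  0 < lambda ->
  (forall x, objective Phi L A y lambda xs <= objective Phi L A y lambda x) ->
  decomposable_at A (L^T *m xs) T pT e ->
  subdiff A (L^T *m xs) alpha ->
  Phi^T *m eta = L *m alpha ->
  dual_norm A ((1%:M - pT) *m alpha) < 1 ->
  (forall x1 x2 : 'cV[R]_N,
      (1%:M - pT) *m (L^T *m x1) = 0 -> (1%:M - pT) *m (L^T *m x2) = 0 ->
      Phi *m x1 = Phi *m x2 -> x1 = x2) ->
  forall x, (forall z, objective Phi L A y lambda x <= objective Phi L A y lambda z) ->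
    x = xs.
Proof.
move=> normA lambda_gt0 xs_min decA alpha_sub dual_cert dual_lt1 inj_ker x x_min.
have lambda_ge0 := ltW lambda_gt0.
have PhiE := minimizers_image_eq normA lambda_ge0 x_min xs_min.
have alpha_dotv z : dotv alpha (L^T *m z) = dotv eta (Phi *m z).
  by rewrite dotv_mulmxr trmxK -dual_cert -dotv_mulmxr.
have tight_xs : dotv alpha (L^T *m xs) = A (L^T *m xs).
  exact: (subdiff_norm_dotv normA alpha_sub).
have tight_x : dotv alpha (L^T *m x) = A (L^T *m x).
  rewrite alpha_dotv PhiE -alpha_dotv tight_xs.
  exact: (minimizers_norm_eq normA lambda_ge0 lambda_gt0 xs_min x_min).
apply: inj_ker PhiE.
- exact: (orth_proj_compl_eq0_of_tight normA decA alpha_sub dual_lt1 tight_x).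
- exact: (orth_proj_compl_eq0_of_tight normA decA alpha_sub dual_lt1 tight_xs).
Qed.
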